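(* Let $n\ge1$, let $0<x_1<x_2<\dots<x_{n+1}<1$, and let $A$ be the $(n+1)\times(n+1)$ Bernstein–Vandermonde matrix, $a_{r,c}=\binom{n}{c-1}x_r^{\,c-1}(1-x_r)^{n-c+1}$. Then all pivots of the Neville elimination of $A^T$ are nonzero, and its multipliers $\widetilde m_{i,j}$ satisfy, for $1\le j\le n$ and $j+1\le i\le n+1$, $$\widetilde m_{i,j}=\frac{(n-i+2)\,x_j}{(i-1)(1-x_j)}.$$
   Context: Neville elimination of a nonsingular $N\times N$ matrix $M$: set $M_1=M$ and, for $t=1,\dots,N-1$, obtain $M_{t+1}=(a^{(t+1)}_{i,j})$ from $M_t=(a^{(t)}_{i,j})$ by $a^{(t+1)}_{i,j}=a^{(t)}_{i,j}$ if $i\le t$; $a^{(t+1)}_{i,j}=a^{(t)}_{i,j}-\big(a^{(t)}_{i,t}/a^{(t)}_{i-1,t}\big)a^{(t)}_{i-1,j}$ if $i\ge t+1$ and $j\ge t+1$; and $a^{(t+1)}_{i,j}=0$ otherwise. The pivot $(i,j)$ is $p_{i,j}=a^{(j)}_{i,j}$ for $1\le j\le i\le N$, and the multiplier is $p_{i,j}/p_{i-1,j}$ for $j<i$. Here $\widetilde m_{i,j}$ denotes the multipliers of the Neville elimination applied to $A^T$. *)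

From mathcomp Require Import all_boot all_order all_algebra.
Set Implicit Arguments. Unset Strict Implicit. Unset Printing Implicit Defensive.
Import Order.TTheory GRing.Theory Num.Theory.
Local Open Scope ring_scope.

Section Neville.
Variable R : fieldType.

(* 1-based entries of a square matrix: mx1 M i j = M_{i,j} for 1 <= i,j <= N,
   and 0 outside that range. *)
Definition mx1 (N : nat) (M : 'M[R]_N) (i j : nat) : R :=
  match (insub i.-1 : option 'I_N), (insub j.-1 : option 'I_N) with
  | Some i', Some j' => if (0 < i)%N && (0 < j)%N then M i' j' else 0
  | _, _ => 0
  end.

Definition nev_step (t : nat) (a : nat -> nat -> R) : nat -> nat -> R :=
  fun i j =>
    if (i <= t)%N then a i j
    else if (t.+1 <= j)%N then a i j - (a i t / a i.-1 t) * a i.-1 j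
    else 0.

(* nev_mat a k = M_{k+1}  (so nev_mat a 0 = M_1 = M). *)
Fixpoint nev_mat (a : nat -> nat -> R) (k : nat) : nat -> nat -> R :=
  match k with
  | 0 => a
  | k'.+1 => nev_step k (nev_mat a k')
  end.

(* Pivot p_{i,j} = a^{(j)}_{i,j}, meaningful for 1 <= j <= i <= N. *)
Definition nev_pivot (N : nat) (M : 'M[R]_N) (i j : nat) : R :=
  nev_mat (mx1 M) j.-1 i j.

Definition nev_mult (N : nat) (M : 'M[R]_N) (i j : nat) : R :=
  nev_pivot M i j / nev_pivot M i.-1 j.

End Neville.

(* Bernstein-Vandermonde matrix, 0-based indices r, c < n+1,
   entry (r+1, c+1) = C(n,c) x_{r+1}^c (1 - x_{r+1})^(n-c). *)
Definition bernstein_vandermonde (R : fieldType) (n : nat) (x : nat -> R)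
  : 'M[R]_n.+1 :=
  \matrix_(r < n.+1, c < n.+1)
     ('C(n, c)%:R * x r.+1 ^+ c * (1 - x r.+1) ^+ (n - c)).

From mathcomp Require Import all_boot all_order all_algebra.
From mathcomp Require Import zify ring.
Set Implicit Arguments. Unset Strict Implicit. Unset Printing Implicit Defensive.
Import Order.TTheory GRing.Theory Num.Theory.
Local Open Scope ring_scope.

(* With [y_j = x_j / (1 - x_j)], the transpose of the Bernstein-Vandermonde
   matrix has entries [C(n, i-1) (1 - x_j)^n y_j^(i-1)]: a Vandermonde matrix
   in the [y_j] scaled by nonzero row factors [c_i] and column factors [w_j].
   Neville elimination of such a matrix is explicit: after [k] steps, a row
   [i > k] reads [c_i w_j y_j^(i-1-k) prod_(l <= k) (y_j - y_l)], so
   consecutive rows differ by the factor [c_i / c_(i-1) y_j]; this is the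
   multiplier, and [C(n, i-1) / C(n, i-2) = (n-i+2) / (i-1)]. *)

Section ScaledVandermondeNeville.
Variable R : fieldType.
Variables (N : nat) (c w y : nat -> R) (M : 'M[R]_N).

Hypothesis mx1_scaled_vdm : forall i j, (1 <= i <= N)%N -> (1 <= j <= N)%N ->
  mx1 M i j = c i * w j * y j ^+ i.-1.
Hypothesis c_neq0 : forall i, (1 <= i <= N)%N -> c i != 0.
Hypothesis w_neq0 : forall j, (1 <= j <= N)%N -> w j != 0.
Hypothesis y_neq0 : forall j, (1 <= j <= N)%N -> y j != 0.
Hypothesis y_inj : forall j l, (1 <= j)%N -> (j < l <= N)%N -> y j != y l.

(* Closed form of [nev_mat (mx1 M) k], i.e. of M_(k+1): row [i] is last
   modified at step [minn k i.-1]. *)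
Definition vdm_stage (k i j : nat) : R :=
  let m := minn k i.-1 in
  if (j <= m)%N then 0
  else c i * w j * y j ^+ (i.-1 - m) * \prod_(l < m) (y j - y l.+1).

Lemma vdm_stage_active k i j : (k < i)%N ->
  vdm_stage k i j =
  if (j <= k)%N then 0
  else c i * w j * y j ^+ (i.-1 - k) * \prod_(l < k) (y j - y l.+1).
Proof. by move=> lt_ki; rewrite /vdm_stage (_ : minn k i.-1 = k) //; lia. Qed.

Lemma vdm_stage_neq0 k i j : (k < i <= N)%N -> (k < j <= N)%N ->
  vdm_stage k i j != 0.
Proof.
move=> /andP[lt_ki le_iN] /andP[lt_kj le_jN].
rewrite vdm_stage_active // ifN -?ltnNge //.
repeat apply: mulf_neq0; first (apply: c_neq0; lia); first (apply: w_neq0; lia).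
  by apply: expf_neq0; apply: y_neq0; lia.
apply/prodf_neq0 => l _; have := ltn_ord l => lt_lk.
by rewrite subr_eq0 eq_sym y_inj //; lia.
Qed.

Lemma vdm_stage_rowS k i j : (k < i.-1 <= N)%N -> (k < j)%N ->
  vdm_stage k i j = c i / c i.-1 * y j * vdm_stage k i.-1 j.
Proof.
move=> /andP[lt_ki le_iN] lt_kj.
rewrite !vdm_stage_active ?ifN -?ltnNge //; try lia.
rewrite (_ : (i.-1 - k = (i.-1.-1 - k).+1)%N); last by lia.
have ci1_neq0 : c i.-1 != 0 by apply: c_neq0; lia.
by rewrite exprS; field.
Qed.

Lemma nev_mat_scaled_vdm k i j : (1 <= i <= N)%N -> (1 <= j <= N)%N ->
  nev_mat (mx1 M) k i j = vdm_stage k i j.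
Proof.
elim: k i j => [|k IH] i j iN jN.
  by rewrite /= mx1_scaled_vdm // /vdm_stage min0n ifN ?subn0 ?big_ord0 ?mulr1 //; lia.
rewrite /= /nev_step; case: (leqP i k.+1) => [le_ik1 | lt_k1i].
  by rewrite IH // /vdm_stage (_ : minn k.+1 i.-1 = minn k i.-1) //; lia.
case: (leqP k.+2 j) => [lt_k1j | le_jk1]; last first.
  by rewrite /vdm_stage ifT //; lia.
have i1N : (1 <= i.-1 <= N)%N by lia.
have k1N : (1 <= k.+1 <= N)%N by lia.
rewrite !IH // (@vdm_stage_rowS k i j) ?(@vdm_stage_rowS k i k.+1) //; try lia.
rewrite mulfK ?vdm_stage_neq0 //; try lia.
have ci1_neq0 : c i.-1 != 0 by apply: c_neq0; lia.
rewrite !vdm_stage_active ?ifN -?ltnNge //; try lia.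
rewrite big_ord_recr /= (_ : (i.-1 - k.+1 = i.-1.-1 - k)%N); last by lia.
by field.
Qed.

Lemma nev_pivot_scaled_vdm i j : (1 <= j <= i)%N -> (i <= N)%N ->
  nev_pivot M i j = vdm_stage j.-1 i j.
Proof. by move=> ji iN; rewrite /nev_pivot nev_mat_scaled_vdm //; lia. Qed.

Lemma nev_pivot_scaled_vdm_neq0 i j : (1 <= j <= i)%N -> (i <= N)%N ->
  nev_pivot M i j != 0.
Proof. by move=> ji iN; rewrite nev_pivot_scaled_vdm // vdm_stage_neq0 //; lia. Qed.

Lemma nev_mult_scaled_vdm i j : (1 <= j < i)%N -> (i <= N)%N ->
  nev_mult M i j = c i / c i.-1 * y j.
Proof.
move=> ji iN; rewrite /nev_mult !nev_pivot_scaled_vdm //; try lia.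
by rewrite vdm_stage_rowS ?mulfK ?vdm_stage_neq0 //; lia.
Qed.

End ScaledVandermondeNeville.

Lemma incr_range_mono (R : numDomainType) (m : nat) (f : nat -> R) :
  (forall r, (1 <= r <= m)%N -> f r < f r.+1) ->
  {in [pred k | 1 <= k <= m.+1]%N &, {mono f : i j / (i <= j)%N >-> i <= j}}.
Proof.
move=> f_incr; apply: Order.NatMonotonyTheory.incn_inP.
  by move=> a b /andP[a1 _] /andP[_ bm] k /andP[ak kb]; apply/andP; split; lia.
by move=> k /andP[k1 _] /andP[_ km]; apply: f_incr; lia.
Qed.

Lemma mx1_trmx_bernstein_vandermonde (R : fieldType) (n : nat) (x : nat -> R)
    i j : (1 <= i <= n.+1)%N -> (1 <= j <= n.+1)%N -> x j != 1 ->
  mx1 (bernstein_vandermonde n x)^T i j =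
  'C(n, i.-1)%:R * (1 - x j) ^+ n * (x j / (1 - x j)) ^+ i.-1.
Proof.
move=> iN jN xj_neq1.
have i1N : (i.-1 < n.+1)%N by lia.
have j1N : (j.-1 < n.+1)%N by lia.
rewrite /mx1 (insubT (fun k => k < n.+1)%N i1N) (insubT (fun k => k < n.+1)%N j1N).
rewrite ifT; last by apply/andP; split; lia.
rewrite !mxE /= prednK; last by lia.
have omx_neq0 : 1 - x j != 0 by rewrite subr_eq0 eq_sym.
have -> : (1 - x j) ^+ n = (1 - x j) ^+ (n - i.-1) * (1 - x j) ^+ i.-1.
  by rewrite -exprD subnK //; lia.
by rewrite expr_div_n; field; rewrite expf_neq0.
Qed.

Lemma odds_inj (R : fieldType) (a b : R) : a != 1 -> b != 1 ->
  a / (1 - a) = b / (1 - b) -> a = b.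
Proof.
move=> a_neq1 b_neq1 /eqP; rewrite eqr_div ?subr_eq0 1?eq_sym // => /eqP eq_ab.
apply/eqP; rewrite -subr_eq0.
have -> : a - b = a * (1 - b) - b * (1 - a) by ring.
by rewrite eq_ab subrr.
Qed.

Lemma binomial_ratio (R : numFieldType) n i : (2 <= i <= n.+1)%N ->
  'C(n, i.-1)%:R / 'C(n, i.-2)%:R = (n.+2 - i)%:R / (i.-1)%:R :> R.
Proof.
move=> iN; have := mul_bin_left n i.-2.
rewrite (_ : i.-2.+1 = i.-1); last by lia.
rewrite (_ : (n - i.-2 = n.+2 - i)%N); last by lia.
move=> /(congr1 (fun m => m%:R : R)); rewrite !natrM => eq_bin.
have i1_neq0 : (i.-1)%:R != 0 :> R by rewrite pnatr_eq0; lia.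
have bin_neq0 : 'C(n, i.-2)%:R != 0 :> R by rewrite pnatr_eq0 -lt0n bin_gt0; lia.
by apply/eqP; rewrite eqr_div // mulrC eq_bin mulrC.
Qed.

Section IncreasingNodes.
Variables (R : realFieldType) (n : nat) (x : nat -> R).
Hypothesis x1_gt0 : 0 < x 1%N.
Hypothesis x_incr : forall r, (1 <= r <= n)%N -> x r < x r.+1.
Hypothesis xn1_lt1 : x n.+1 < 1.

Let x_mono := incr_range_mono x_incr.

Lemma node_in01 j : (1 <= j <= n.+1)%N -> 0 < x j < 1.
Proof.
move=> jN; have x1_le : x 1%N <= x j by rewrite x_mono ?inE //; lia.
have le_xn1 : x j <= x n.+1 by rewrite x_mono ?inE //; lia.
by rewrite (lt_le_trans x1_gt0) ?(le_lt_trans le_xn1).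
Qed.

Lemma node_neq1 j : (1 <= j <= n.+1)%N -> x j != 1.
Proof. by move=> /node_in01 /andP[_ ?]; rewrite lt_eqF. Qed.

Lemma subr_node_neq0 j : (1 <= j <= n.+1)%N -> 1 - x j != 0.
Proof. by move=> /node_neq1; rewrite subr_eq0 eq_sym. Qed.

Lemma odds_node_neq0 j : (1 <= j <= n.+1)%N -> x j / (1 - x j) != 0.
Proof.
move=> jN; have /andP[xj_gt0 _] := node_in01 jN.
by rewrite mulf_neq0 ?invr_eq0 ?subr_node_neq0 ?gt_eqF.
Qed.

Lemma odds_node_neq j l : (1 <= j)%N -> (j < l <= n.+1)%N ->
  x j / (1 - x j) != x l / (1 - x l).
Proof.
move=> j1 jl.
have xj1 : x j != 1 by apply: node_neq1; lia.
have xl1 : x l != 1 by apply: node_neq1; lia.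
apply/eqP => /(odds_inj xj1 xl1) eq_x.
have /esym : (x l <= x j) = (l <= j)%N by apply: x_mono; rewrite inE; lia.
by rewrite eq_x lexx; lia.
Qed.

Lemma mx1_trmx_bernstein_nodes i j : (1 <= i <= n.+1)%N -> (1 <= j <= n.+1)%N ->
  mx1 (bernstein_vandermonde n x)^T i j =
  'C(n, i.-1)%:R * (1 - x j) ^+ n * (x j / (1 - x j)) ^+ i.-1.
Proof. by move=> iN jN; rewrite mx1_trmx_bernstein_vandermonde ?node_neq1. Qed.

End IncreasingNodes.

Theorem mainTheorem6 (R : realFieldType) (n : nat) (x : nat -> R) :
  (1 <= n)%N ->
  0 < x 1%N ->
  (forall r : nat, (1 <= r <= n)%N -> x r < x r.+1) ->
  x n.+1 < 1 ->
  (forall i j : nat, (1 <= j)%N -> (j <= i)%N -> (i <= n.+1)%N ->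
     nev_pivot (bernstein_vandermonde n x)^T i j != 0) /\
  (forall i j : nat, (1 <= j <= n)%N -> (j.+1 <= i <= n.+1)%N ->
     nev_mult (bernstein_vandermonde n x)^T i j =
       ((n.+2 - i)%:R * x j) / ((i.-1)%:R * (1 - x j))).
Proof.
move=> _ x1_gt0 x_incr xn1_lt1.
have bv := mx1_trmx_bernstein_nodes x1_gt0 x_incr xn1_lt1.
have y_neq0 := odds_node_neq0 x1_gt0 x_incr xn1_lt1.
have y_inj := odds_node_neq x1_gt0 x_incr xn1_lt1.
have c_neq0 i : (1 <= i <= n.+1)%N -> 'C(n, i.-1)%:R != 0 :> R.
  by move=> iN; rewrite pnatr_eq0 -lt0n bin_gt0; lia.
have w_neq0 j : (1 <= j <= n.+1)%N -> (1 - x j) ^+ n != 0.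
  by move=> jN; rewrite expf_neq0 ?(subr_node_neq0 x1_gt0 x_incr xn1_lt1).
split=> i j.
  move=> j_gt0 le_ji le_iN.
  by apply: (nev_pivot_scaled_vdm_neq0 bv c_neq0 w_neq0 y_neq0 y_inj); lia.
move=> jN iN; rewrite (nev_mult_scaled_vdm bv c_neq0 w_neq0 y_neq0 y_inj); try lia.
by rewrite binomial_ratio ?mulf_div //; lia.
Qed.
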